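(* Let $q\ge2$ be a prime power, $d\ge6$, $2\le j\le d$ and $1\le i\le d-3$. Then $|T_{h-1}(i,j)|<|T_h(i,j)|$ for every $h=1,\dots,h_{\max}(i,j)$, where $h_{\max}(i,j)=\min\{j,d-i\}$.
   Context: Let $b=-q$. For integers $m\ge0$ and $l$, ${m\brack l}_b=\prod_{t=1}^{l}\frac{b^{m-t+1}-1}{b^t-1}$ for $l\ge0$ and $0$ for $l<0$. For $0\le i,j\le d$, $$Q_j(i)=\sum_{h=0}^{\min\{j,d-i\}}(-1)^j(-q)^{\binom{j-h}{2}+hd}{d-h\brack d-j}_b{d-i\brack h}_b,$$ the eigenvalues of the Hermitian forms graph $Q_q(d,j)$. $T_h(i,j)$ denotes the $h$-th summand (including the factor $(-1)^j$). *)

From mathcomp Require Import all_boot all_order all_algebra.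
Set Implicit Arguments. Unset Strict Implicit. Unset Printing Implicit Defensive.
Import Order.TTheory GRing.Theory Num.Theory.
Local Open Scope ring_scope.

Definition gbin (b : rat) (m l : nat) : rat :=
  \prod_(1 <= t < l.+1) ((b ^+ (m - t + 1)%N - 1) / (b ^+ t - 1)).

(* h-th summand of Q_j(i), with b = -q, including the factor (-1)^j. *)
Definition Tsum (q d i j h : nat) : rat :=
  let b := - (q%:R : rat) in
  (-1) ^+ j * b ^+ ('C(j - h, 2) + h * d)%N
    * gbin b (d - h) (d - j) * gbin b (d - i) h.

Definition hmax (d i j : nat) : nat := minn j (d - i).

From mathcomp Require Import all_boot all_order all_algebra.
From mathcomp Require Import lra ring zify.
Import Order.TTheory GRing.Theory Num.Theory.
Local Open Scope ring_scope.

(* Write Q = q >= 2 and b = -Q.  Two recurrences of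
   the Gaussian binomials (raising the lower index, raising the upper index)
   give the exact ratio between consecutive summands:
     T_{g+1} * b^(j-g-1) (b^(d-g) - 1)(b^(g+1) - 1)
       = T_g * b^d (b^(j-g) - 1)(b^(d-i-g) - 1).
   Taking absolute values, it remains to compare the two cofactors, using
   only the elementary bounds Q^t - 1 <= |b^t - 1| <= Q^t + 1 (with the
   sharper |b - 1| = Q + 1 for t = 1); this is a real inequality in a few
   unknowns, isolated as [cofactor_lt].  Since no summand vanishes, the
   ratio identity then yields |T_g| < |T_{g+1}| whenever g < j and
   g < d - i, which is the theorem with h = g + 1.  Primality of p is only
   used to get q >= 2. *)

Section GaussianBinomial.
Variable b : rat.

Lemma gbin_recr (m l : nat) :
  gbin b m l.+1 = gbin b m l * ((b ^+ (m - l.+1 + 1) - 1) / (b ^+ l.+1 - 1)).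
Proof. by rewrite /gbin big_nat_recr. Qed.

Lemma gbin_recr_mul (m l : nat) : (l < m)%N -> b ^+ l.+1 - 1 != 0 ->
  gbin b m l.+1 * (b ^+ l.+1 - 1) = gbin b m l * (b ^+ (m - l) - 1).
Proof.
move=> lt_lm nz; rewrite gbin_recr (_ : (m - l.+1 + 1 = m - l)%N); last by lia.
by rewrite -!mulrA mulVf ?mulr1.
Qed.

Lemma gbin_succ_top (m l : nat) : (l <= m)%N ->
  gbin b m.+1 l * (b ^+ (m.+1 - l) - 1) = gbin b m l * (b ^+ m.+1 - 1).
Proof.
elim: l => [_|l IH lt_lm]; first by rewrite /gbin !big_geq // subn0.
rewrite !gbin_recr (_ : (m.+1 - l.+1 + 1 = m.+1 - l)%N); last by lia.
rewrite (_ : (m - l.+1 + 1 = m.+1 - l.+1)%N); last by lia.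
transitivity (gbin b m.+1 l * (b ^+ (m.+1 - l) - 1)
                * ((b ^+ (m.+1 - l.+1) - 1) / (b ^+ l.+1 - 1))); first by ring.
by rewrite IH ?(ltnW lt_lm) //; ring.
Qed.

End GaussianBinomial.

Section NegativeBase.
Variable Q : rat.
Hypothesis Q_ge2 : 2 <= Q.
Local Notation b := (- Q).

Lemma norm_b_pow (t : nat) : `|b ^+ t| = Q ^+ t.
Proof. by rewrite normrX normrN ger0_norm //; have := Q_ge2; lra. Qed.

Lemma Q_le_pow (t : nat) : (1 <= t)%N -> Q <= Q ^+ t.
Proof.
by move=> t_ge1; rewrite -{1}(expr1 Q) ler_weXn2l //; have := Q_ge2; lra.
Qed.

Lemma norm_pow_sub1_ge (t : nat) : Q ^+ t - 1 <= `|b ^+ t - 1|.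
Proof. by have := lerB_dist (b ^+ t) 1; rewrite norm_b_pow normr1. Qed.

Lemma norm_pow_sub1_le (t : nat) : `|b ^+ t - 1| <= Q ^+ t + 1.
Proof. by have := ler_normB (b ^+ t) 1; rewrite norm_b_pow normr1. Qed.

Lemma pow_sub1_neq0 (t : nat) : (1 <= t)%N -> b ^+ t - 1 != 0.
Proof.
move=> t_ge1; rewrite -normr_gt0.
by have := norm_pow_sub1_ge t; have := Q_le_pow t t_ge1; have := Q_ge2; lra.
Qed.

Lemma gbin_neq0 (m l : nat) : gbin b m l != 0.
Proof.
rewrite /gbin big_seq; apply: (big_ind (fun x => x != 0)) => //.
  by move=> x y; apply: mulf_neq0.
move=> t; rewrite mem_index_iota => /andP[t_ge1 _].
by rewrite mulf_neq0 ?invr_neq0 ?pow_sub1_neq0 // addn1.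
Qed.

Lemma norm_pow_sub1_cases (t : nat) :
  (Q ^+ t = 1 /\ `|b ^+ t.+1 - 1| = Q + 1) \/
  (Q <= Q ^+ t /\ Q * Q ^+ t - 1 <= `|b ^+ t.+1 - 1|).
Proof.
case: t => [|t]; last by right; rewrite -exprS Q_le_pow ?norm_pow_sub1_ge.
by left; rewrite expr0 expr1 -opprD normrN ger0_norm //; have := Q_ge2; lra.
Qed.

Lemma three_le_norm_pow_sub1 (t : nat) : (1 <= t)%N -> 3 <= `|b ^+ t - 1|.
Proof.
case: t => // t _; have Q2 := Q_ge2.
have [[_ ->]|[Qt ge_t]] := norm_pow_sub1_cases t; first lra.
have : Q * Q <= Q * Q ^+ t by apply: ler_pM; lra.
nra.
Qed.

(* The cofactor on the side of T_{g+1}, with a = d - g and c = g + 1. *)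
Lemma norm_prod_pow_sub1_le (a c n : nat) :
  (a + c = n.+1)%N -> (1 <= a)%N -> (1 <= c)%N ->
  `|b ^+ a - 1| * `|b ^+ c - 1| <= Q * Q ^+ n + 2 * Q ^+ n + 1.
Proof.
move=> acn a_ge1 c_ge1; have Q2 := Q_ge2.
have le_a := norm_pow_sub1_le a; have le_c := norm_pow_sub1_le c.
have prod_le : `|b ^+ a - 1| * `|b ^+ c - 1| <= (Q ^+ a + 1) * (Q ^+ c + 1).
  by apply: ler_pM.
have ac_eq : Q ^+ a * Q ^+ c = Q * Q ^+ n by rewrite -exprD -exprS acn.
have a_le : Q ^+ a <= Q ^+ n by apply: ler_weXn2l; [lra|lia].
have c_le : Q ^+ c <= Q ^+ n by apply: ler_weXn2l; [lra|lia].
lra.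
Qed.

End NegativeBase.

(* The comparison of the two cofactors, as an inequality between reals:
   X stands for Q^(j-g-1), Y for Q^d, A for |b^(j-g) - 1|,
   C for |b^(d-i-g) - 1| and M * H for |b^(d-g) - 1| |b^(g+1) - 1|. *)
Lemma cofactor_lt (Q Y X A C M H : rat) :
  2 <= Q -> 4 <= Y -> 3 <= C -> 0 <= M -> 0 <= H ->
  M * H <= Q * Y + 2 * Y + 1 ->
  (X = 1 /\ A = Q + 1) \/ (Q <= X /\ Q * X - 1 <= A) ->
  X * (M * H) < Y * A * C.
Proof.
move=> Q2 Y4 C3 M0 H0 MH [[-> ->]|[QX AX]].
  have : Y * (Q + 1) * 3 <= Y * (Q + 1) * C by apply: ler_pM; nra.
  nra.
have QX4 : 4 <= Q * X by nra.
have A_ge : Y * (Q * X - 1) * 3 <= Y * A * C.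
  by apply: ler_pM; [apply: mulr_ge0; lra|lra|apply: ler_pM; lra|lra].
have XMH : X * (M * H) <= X * (Q * Y + 2 * Y + 1) by apply: ler_pM; nra.
have QXY : 2 * (X * Y) <= Q * (X * Y) by apply: ler_pM; nra.
have XY : 0 <= (X - 2) * (Y - 4) by apply: mulr_ge0; lra.
lra.
Qed.

Lemma Tsum_ratio (q d i j g : nat) :
  (2 <= q)%N -> (g < j <= d)%N -> (g < d - i)%N ->
  let b := - (q%:R : rat) in
  Tsum q d i j g.+1 * (b ^+ (j - g.+1) * (b ^+ (d - g) - 1) * (b ^+ g.+1 - 1))
  = Tsum q d i j g * (b ^+ d * (b ^+ (j - g) - 1) * (b ^+ (d - i - g) - 1)).
Proof.
move=> q2 /andP[lt_gj le_jd] lt_gdi b.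
have Q2 : 2 <= (q%:R : rat) by rewrite (ler_nat _ 2 q).
(* The powers of b in T_g and T_{g+1} differ by b^(j-g-1) and b^d. *)
have exp_g : ('C(j - g, 2) + g * d = 'C(j - g.+1, 2) + g * d + (j - g.+1))%N.
  by rewrite -[(j - g)%N]subSS subSn // binS bin1; lia.
have exp_g1 : ('C(j - g.+1, 2) + g.+1 * d = 'C(j - g.+1, 2) + g * d + d)%N.
  by rewrite mulSn; lia.
have top := @gbin_succ_top b (d - g.+1) (d - j) ltac:(lia).
rewrite (_ : (d - g.+1).+1 = d - g)%N in top; last by lia.
rewrite (_ : (d - g - (d - j) = j - g)%N) in top; last by lia.
have low := @gbin_recr_mul b (d - i) g lt_gdi (@pow_sub1_neq0 _ Q2 g.+1 isT).
rewrite /Tsum -/b exp_g exp_g1 !exprD.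
set e := b ^+ 'C(j - g.+1, 2) * b ^+ (g * d).
transitivity ((-1) ^+ j * e * b ^+ d * b ^+ (j - g.+1)
  * (gbin b (d - g.+1) (d - j) * (b ^+ (d - g) - 1))
  * (gbin b (d - i) g.+1 * (b ^+ g.+1 - 1))); first by rewrite /e; ring.
by rewrite -top low /e; ring.
Qed.

Lemma Tsum_neq0 (q d i j h : nat) : (2 <= q)%N -> Tsum q d i j h != 0.
Proof.
move=> q2; have Q2 : 2 <= (q%:R : rat) by rewrite (ler_nat _ 2 q).
have b0 : - (q%:R : rat) != 0 by rewrite oppr_eq0 -normr_gt0 ger0_norm; lra.
by rewrite /Tsum /= !mulf_neq0 ?gbin_neq0 ?expf_neq0 ?signr_eq0.
Qed.

Lemma Tsum_step (q d i j g : nat) :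
  (2 <= q)%N -> (2 <= d)%N -> (g < j <= d)%N -> (g < d - i)%N ->
  `|Tsum q d i j g| < `|Tsum q d i j g.+1|.
Proof.
move=> q2 d2 gjd lt_gdi; have /andP[lt_gj le_jd] := gjd.
set Q : rat := q%:R; have Q2 : 2 <= Q by rewrite /Q (ler_nat _ 2 q).
have T0_gt0 : 0 < `|Tsum q d i j g| by rewrite normr_gt0 Tsum_neq0.
have := congr1 Num.norm (Tsum_ratio q d i j g q2 gjd lt_gdi).
(* Abstract the summands so that [normrM] does not unfold them. *)
move: T0_gt0; generalize (Tsum q d i j g) (Tsum q d i j g.+1) => T0 T1 T0_gt0 ratio.
rewrite -/Q !normrM !(norm_b_pow Q Q2) in ratio.
have M0 : 0 < `|(- Q) ^+ (d - g) - 1| by rewrite normr_gt0 pow_sub1_neq0 //; lia.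
have H0 : 0 < `|(- Q) ^+ g.+1 - 1| by rewrite normr_gt0 pow_sub1_neq0.
have X0 : 0 < Q ^+ (j - g.+1) by apply: exprn_gt0; lra.
have Y4 : 4 <= Q ^+ d.
  have : Q ^+ 2 <= Q ^+ d by apply: ler_weXn2l; [lra|lia].
  by rewrite expr2; nra.
have C3 := three_le_norm_pow_sub1 Q Q2 (d - i - g) ltac:(lia).
have MH := norm_prod_pow_sub1_le Q Q2 (d - g) g.+1 d ltac:(lia) ltac:(lia) isT.
have AX := norm_pow_sub1_cases Q Q2 (j - g.+1).
rewrite (_ : (j - g.+1).+1 = j - g)%N in AX; last by lia.
have lt_cof := @cofactor_lt _ _ _ _ _ _ _ Q2 Y4 C3 (ltW M0) (ltW H0) MH AX.
rewrite -(ltr_pM2r (mulr_gt0 (mulr_gt0 X0 M0) H0)) ratio ltr_pM2l //.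
by rewrite -mulrA; move: lt_cof; rewrite !mulrA.
Qed.

Theorem lemma5p2 (p k q d i j : nat) :
  prime p -> (0 < k)%N -> q = (p ^ k)%N ->
  (6 <= d)%N -> (2 <= j <= d)%N -> (1 <= i <= d - 3)%N ->
  forall h : nat, (1 <= h <= hmax d i j)%N ->
    `|Tsum q d i j h.-1| < `|Tsum q d i j h|.
Proof.
move=> p_prime k_gt0 -> d_ge6 /andP[_ le_jd] _ [//|g] /andP[_].
rewrite /hmax leq_min => /andP[lt_gj lt_gdi] /=.
have q_ge2 : (2 <= p ^ k)%N.
  rewrite (leq_trans (prime_gt1 p_prime)) // -{1}(expn1 p).
  by rewrite leq_pexp2l // prime_gt0.
by apply: Tsum_step => //; [lia | rewrite lt_gj].
Qed.
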